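(* Let $A$ be a partial ring and $a,b\in A$. If $D(b)\subseteq D(a)$, then there exists $k\in\mathbb{N}$ such that $b^k\in(a)$.
   Context: A partial ring is a set $A$ with $0$, a set $A_2\subseteq A\times A$ of summable pairs and a partial addition ($0$ a unit summable with everything; commutative; associative in the sense: $(a,b),(a+b,c)\in A_2$ iff $(b,c),(a,b+c)\in A_2$, and then $(a+b)+c=a+(b+c)$), with a commutative associative multiplication with unit $1$ such that $0\cdot a=0$ and $(a_1,a_2)\in A_2\Rightarrow(a_1x,a_2x)\in A_2$, $(a_1+a_2)x=a_1x+a_2x$. A tuple $(c_1,\dots,c_r)$ is summable if $c_1+\dots+c_r$ can be calculated in $A$. The ideal $(a)$ is $\{c_1a+\dots+c_ra: r\in\mathbb{N}, c_i\in A, (c_1a,\dots,c_ra)\text{ summable}\}$. A prime ideal is a subset $\mathfrak p\ne A$ containing $0$, closed under sums of summable pairs of its elements, with $A\mathfrak p\subseteq\mathfrak p$, and such that $xy\in\mathfrak p$ implies $x\in\mathfrak p$ or $y\in\mathfrak p$. $D(a)$ is the set of prime ideals $\mathfrak p$ with $a\notin\mathfrak p$. *)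

From Stdlib Require Import List.
Import ListNotations.
Set Implicit Arguments.

(* The partial addition is modelled as a total function
   [padd] together with the summability relation [summ] (the set A_2);
   the value of [padd x y] is only constrained when [summ x y] holds. *)
Record PartialRing := {
  carrier :> Type;
  pzero : carrier;
  pone : carrier;
  summ : carrier -> carrier -> Prop;
  padd : carrier -> carrier -> carrier;
  pmul : carrier -> carrier -> carrier;
  summ0 : forall a, summ pzero a;
  add0 : forall a, padd pzero a = a;
  summC : forall a b, summ a b -> summ b a;
  addC : forall a b, summ a b -> padd a b = padd b a;
  summA : forall a b c,
    (summ a b /\ summ (padd a b) c) <-> (summ b c /\ summ a (padd b c));
  addA : forall a b c, summ a b -> summ (padd a b) c ->
    padd (padd a b) c = padd a (padd b c);
  mulC : forall a b, pmul a b = pmul b a;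
  mulA : forall a b c, pmul (pmul a b) c = pmul a (pmul b c);
  mul1 : forall a, pmul pone a = a;
  mul0 : forall a, pmul pzero a = pzero;
  summ_mul : forall a1 a2 x, summ a1 a2 -> summ (pmul a1 x) (pmul a2 x);
  mulDl : forall a1 a2 x, summ a1 a2 ->
    pmul (padd a1 a2) x = padd (pmul a1 x) (pmul a2 x)
}.

Section Defs.
Variable A : PartialRing.

Fixpoint lsum (l : list A) : A :=
  match l with
  | [] => pzero A
  | x :: l' => padd A x (lsum l')
  end.

Fixpoint summable (l : list A) : Prop :=
  match l with
  | [] => True
  | x :: l' => summable l' /\ summ A x (lsum l')
  end.

Definition principal_ideal (a : A) : A -> Prop :=
  fun y => exists cs : list A,
    summable (map (fun c => pmul A c a) cs) /\
    y = lsum (map (fun c => pmul A c a) cs).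

Definition prime_ideal (p : A -> Prop) : Prop :=
  (exists x, ~ p x) /\
  p (pzero A) /\
  (forall x y, p x -> p y -> summ A x y -> p (padd A x y)) /\
  (forall c x, p x -> p (pmul A c x)) /\
  (forall x y, p (pmul A x y) -> p x \/ p y).

Definition Dset (a : A) : (A -> Prop) -> Prop :=
  fun p => prime_ideal p /\ ~ p a.

Fixpoint ppow (x : A) (k : nat) : A :=
  match k with
  | O => pone A
  | S k' => pmul A x (ppow x k')
  end.

End Defs.

From Stdlib Require Import List.
From mathcomp Require Import ssreflect ssrfun ssrbool boolp classical_sets.
Import ListNotations.

(* If no power of b lies in (a), Zorn's lemma yields an ideal M containing a
   and maximal among the ideals avoiding the powers of b.  Such an M is prime:
   if xy is in M but x and y are not, maximality puts some b^m in the ideal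
   generated by M and x and some b^n in the one generated by M and y, and
   multiplying out puts b^(m+n) in M.  So M lies in D(b) but not in D(a).
   In a partial ring the ideal generated by a set closed under multiplication
   by scalars is the set of its summable finite sums. *)

Set Implicit Arguments.
Unset Strict Implicit.

Local Open Scope classical_set_scope.

Lemma Zorn_bigcup_above (T : Type) (P : set (set T)) (X0 : set T) :
  P X0 ->
  (forall F : set (set T), F `<=` P -> F !=set0 -> total_on F subset ->
    P (\bigcup_(X in F) X)) ->
  exists M, [/\ P M, X0 `<=` M & forall N, M `<` N -> ~ P N].
Proof.
move=> PX0 chainP.
(* [Zorn_bigcup] also needs the union [set0] of the empty chain. *)
pose Q X := X = set0 \/ P X /\ X0 `<=` X.
have [M [QM maxM]] : exists M, Q M /\ forall N, M `<` N -> ~ Q N.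
  apply: Zorn_bigcup => F FQ Ftot.
  have [[X FX [x Xx]]|Fempty] := pselect (exists2 X, F X & X !=set0); last first.
    left; apply/seteqP; split=> [t [X FX Xt]|//].
    by apply: Fempty; exists X => //; exists t.
  pose G := [set X | F X /\ X !=set0].
  have -> : \bigcup_(X in F) X = \bigcup_(X in G) X.
    apply/seteqP; split=> t [Y FY Yt]; last by exists Y; [case: FY|].
    by exists Y => //; split=> //; exists t.
  have GP : G `<=` P.
    by move=> Y [/FQ [->|[]//] [y []]].
  have GX : G X by split=> //; exists x.
  right; split.
    apply: chainP => //; first by exists X.
    by move=> Y Z [FY _] [FZ _]; exact: Ftot.
  case: (FQ X FX) => [Xempty|[_ X0X] t /X0X]; last by exists X.
  by move: Xx; rewrite Xempty.
have [PM X0M] : P M /\ X0 `<=` M.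
  case: QM => [M0|//].
  suff : X0 `<=` set0 by rewrite subset0 M0 => <-; split.
  move=> x X0x; apply: (maxM X0); last by right; split.
  by rewrite M0; split=> [y //|/(_ x X0x)].
exists M; split=> // N MN PN; apply: (maxM N MN); right; split=> //.
exact: subset_trans (properW MN).
Qed.

Declare Scope pring_scope.

Section PartialRingIdeals.
Variable A : PartialRing.

Local Notation "0" := (pzero A) : pring_scope.
Local Notation "1" := (pone A) : pring_scope.
Local Notation "x + y" := (padd A x y) : pring_scope.
Local Notation "x * y" := (pmul A x y) : pring_scope.
Local Open Scope pring_scope.

Record is_ideal (I : set A) : Prop := IsIdeal {
  ideal0 : I 0;
  idealD : forall x y, I x -> I y -> summ A x y -> I (x + y);
  idealMl : forall c x, I x -> I (c * x)
}.

Definition finite_sums (S : set A) : set A :=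
  fun y => exists l : list A, [/\ summable A l, Forall S l & y = lsum A l].

Definition multiples (z : A) : set A := range (pmul A ^~ z).

Definition avoids_powers (b : A) (I : set A) : Prop :=
  ~ exists k, I (ppow A b k).

Lemma mulACA (x y z t : A) : (x * y) * (z * t) = (x * z) * (y * t).
Proof. by rewrite !mulA; congr (_ * _); rewrite -!mulA (mulC A y z). Qed.

Lemma ppowD (b : A) m n : ppow A b (m + n) = ppow A b m * ppow A b n.
Proof. by elim: m => [|m IHm] /=; rewrite ?mul1 // IHm mulA. Qed.

Lemma ppow1 (b : A) : ppow A b 1 = b.
Proof. by rewrite /= mulC mul1. Qed.

Lemma multiples_mull (z c u : A) : multiples z u -> multiples z (c * u).
Proof. by case=> d _ <-; exists (c * d); rewrite ?mulA. Qed.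

Lemma lsum_cat (l1 l2 : list A) :
  summable A l1 -> summable A l2 -> summ A (lsum A l1) (lsum A l2) ->
  summable A (l1 ++ l2) /\ lsum A (l1 ++ l2) = lsum A l1 + lsum A l2.
Proof.
elim: l1 => [|x l1 IH] /=; first by rewrite add0.
move=> [s1 sx] s2 s12.
have [s1_2 sx_12] := proj1 (summA A x (lsum A l1) (lsum A l2)) (conj sx s12).
have [s1_2' ->] := IH s1 s2 s1_2.
by do 2?split=> //; rewrite addA.
Qed.

Lemma lsum_mulr (l : list A) (z : A) : summable A l ->
  summable A (map (pmul A ^~ z) l) /\ lsum A l * z = lsum A (map (pmul A ^~ z) l).
Proof.
elim: l => [|x l IH] /= => [|[sl sx]]; first by rewrite mul0.
have [szl <-] := IH sl.
by do 2?split=> //; [exact: summ_mul | rewrite mulDl].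
Qed.

Lemma ideal_lsum (I : set A) (l : list A) :
  is_ideal I -> summable A l -> Forall I l -> I (lsum A l).
Proof.
move=> [I0 ID _]; elim: l => [|x l IH] //= [sl sx] /Forall_cons_iff [Ix Il].
exact: ID (IH sl Il) sx.
Qed.

Lemma sub_finite_sums (S : set A) : S `<=` finite_sums S.
Proof.
move=> u Su; have u0 : summ A u 0 by exact/summC/summ0.
by exists [u]; split=> /=; [|constructor|rewrite addC ?add0].
Qed.

Lemma finite_sums_ideal (S : set A) :
  (forall c u, S u -> S (c * u)) -> is_ideal (finite_sums S).
Proof.
move=> SM; split.
- by exists [].
- move=> _ _ [l1 [s1 S1 ->]] [l2 [s2 S2 ->]] s12.
  have [s12' <-] := lsum_cat s1 s2 s12.
  by exists (l1 ++ l2); split=> //; exact/Forall_app.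
- move=> c _ [l [sl Sl ->]]; rewrite mulC.
  have [scl ->] := lsum_mulr c sl.
  exists (map (pmul A ^~ c) l); split=> //.
  by apply/Forall_map; apply: Forall_impl Sl => u Su; rewrite mulC; exact: SM.
Qed.

Lemma ideal_mul_finite_sums (I S T : set A) (u v : A) : is_ideal I ->
  (forall s t, S s -> T t -> I (s * t)) ->
  finite_sums S u -> finite_sums T v -> I (u * v).
Proof.
move=> idI IST [l1 [s1 S1 ->]] [l2 [s2 T2 ->]].
have [s1v ->] := lsum_mulr (lsum A l2) s1.
apply: ideal_lsum s1v _ => //; apply/Forall_map; apply: Forall_impl S1 => s Ss.
rewrite mulC; have [s2s ->] := lsum_mulr s s2.
apply: ideal_lsum s2s _ => //; apply/Forall_map; apply: Forall_impl T2 => t Tt.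
by rewrite mulC; exact: IST.
Qed.

Lemma principal_idealE (a : A) : principal_ideal A a = finite_sums (multiples a).
Proof.
apply/seteqP; split=> y [l].
  case=> sl ->; exists (map (pmul A ^~ a) l); split=> //.
  by apply/Forall_map/Forall_forall => c _; exists c.
case=> sl Ml ->; have [cs El] : exists cs, l = map (pmul A ^~ a) cs.
  elim: Ml {sl} => [|_ l' [c _ <-] _ [cs ->]]; first by exists [].
  by exists (c :: cs).
by exists cs; rewrite -El.
Qed.

Lemma ideal_bigcup_chain (F : set (set A)) : F `<=` is_ideal -> F !=set0 ->
  total_on F subset -> is_ideal (\bigcup_(X in F) X).
Proof.
move=> Fid [X0 FX0] Ftot; split.
- by exists X0 => //; exact: (ideal0 (Fid X0 FX0)).
- move=> x y [X FX Xx] [Y FY Yy] sxy.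
  have [XY|YX] := Ftot X Y FX FY.
  + by exists Y => //; exact: (idealD (Fid Y FY) (XY _ Xx) Yy sxy).
  + by exists X => //; exact: (idealD (Fid X FX) Xx (YX _ Yy) sxy).
- by move=> c x [X FX Xx]; exists X => //; exact: (idealMl (Fid X FX) _ Xx).
Qed.

Lemma exists_maximal_avoiding (b : A) (I : set A) :
  is_ideal I -> avoids_powers b I ->
  exists M, [/\ is_ideal M /\ avoids_powers b M, I `<=` M &
    forall N, M `<` N -> ~ (is_ideal N /\ avoids_powers b N)].
Proof.
move=> idI avI; apply: Zorn_bigcup_above => // F FP Fne Ftot; split.
  by apply: ideal_bigcup_chain => // X /FP [].
by move=> [k [X /FP [_ avX] Xk]]; apply: avX; exists k.
Qed.

Section MaximalAvoidingPowers.
Variables (b : A) (M : set A).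
Hypotheses (idM : is_ideal M) (avM : avoids_powers b M).
Hypothesis maxM : forall N, M `<` N -> ~ (is_ideal N /\ avoids_powers b N).

Lemma adjoin_meets_powers (z : A) :
  ~ M z -> exists m, finite_sums (M `|` multiples z) (ppow A b m).
Proof.
move=> Mz; apply: contrapT => noPow.
apply: (maxM (N := finite_sums (M `|` multiples z))); split.
- by move=> x Mx; apply: sub_finite_sums; left.
- move=> /(_ z) Nz; apply/Mz/Nz/sub_finite_sums; right.
  by exists 1; rewrite ?mul1.
- apply: finite_sums_ideal => c u [Mu|zu]; first by left; exact: idealMl.
  by right; exact: multiples_mull.
- exact: noPow.
Qed.

Lemma maximal_avoiding_prime : prime_ideal A M.
Proof.
case: (idM) => M0 MD MM.
split; first by exists 1 => M1; apply: avM; exists 0%nat.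
do 3 (split=> //).
move=> x y Mxy; apply: contrapT => /not_orP [Mx My].
have [m xm] := adjoin_meets_powers Mx.
have [n yn] := adjoin_meets_powers My.
apply: avM; exists (m + n)%nat; rewrite ppowD.
apply: (ideal_mul_finite_sums idM _ xm yn) => s t [Ms|[c _ <-]] Tt.
  by rewrite mulC; exact: MM.
case: Tt => [Mt|[d _ <-]]; first exact: MM.
by rewrite mulACA; exact: MM.
Qed.

End MaximalAvoidingPowers.

End PartialRingIdeals.

Theorem mainTheorem18 (A : PartialRing) (a b : A) :
  (forall p : A -> Prop, @Dset A b p -> @Dset A a p) ->
  exists k : nat, @principal_ideal A a (@ppow A b k).
Proof.
move=> DbDa; apply: contrapT; rewrite principal_idealE => avoid_a.
have [M [[idM avM] aM maxM]] :=
  exists_maximal_avoiding (finite_sums_ideal (@multiples_mull A a)) avoid_a.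
have bM : ~ M b by rewrite -(ppow1 b) => Mb; apply: avM; exists 1.
have [_] := DbDa M (conj (maximal_avoiding_prime idM avM maxM) bM).
by apply; apply/aM/sub_finite_sums; exists (pone A); rewrite ?mul1.
Qed.
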